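(* Let $q\ge 2$ be even, let $m\ge 2$ and $n$ be integers, and let $\boldsymbol{x}\in\Sigma_q^n$ be an $m$-RCD root. If $\boldsymbol{y}=RC_{k,i}(\boldsymbol{x})$ for some integer $k\ge 3m-3$ and some position $i\in[1,n-k+1]$, then $\boldsymbol{y}_{[i+k,i+2k-1]}=\boldsymbol{y}_{[i,i+k-1]}^{RC}$, and $\boldsymbol{y}_{[j+k,j+2k-1]}\neq \boldsymbol{y}_{[j,j+k-1]}^{RC}$ for every integer $j$ with $1\le j<i$.
   Context: $\Sigma_q=\{0,1,\dots,q-1\}$, and $[a,b]=\{a,a+1,\dots,b\}$ (empty if $a>b$). For $\boldsymbol{x}=x_1\cdots x_n$, $\boldsymbol{x}_{[a,b]}=x_a\cdots x_b$. A complement operation is a fixed bijection $a\mapsto\overline{a}$ on $\Sigma_q$ with $\overline{a}\ne a$ and $\overline{\overline{a}}=a$ for all $a$ (so $q$ is even). For $\boldsymbol{x}=x_1\cdots x_n$, its reverse-complement is $\boldsymbol{x}^{RC}=\overline{x_n}\,\overline{x_{n-1}}\cdots\overline{x_1}$. For $\boldsymbol{x}=\boldsymbol{u}\boldsymbol{v}\boldsymbol{w}$ with $|\boldsymbol{u}|=i-1$, $|\boldsymbol{v}|=k$, the $k$-reverse-complement duplication at position $i$ gives $RC_{k,i}(\boldsymbol{x})=\boldsymbol{u}\boldsymbol{v}\boldsymbol{v}^{RC}\boldsymbol{w}$. A string $\boldsymbol{x}\in\Sigma_q^n$ is an $m$-RCD root if $\boldsymbol{x}_{[i+m,i+2m-1]}\ne\boldsymbol{x}_{[i,i+m-1]}^{RC}$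 for every $i\in[1,n-2m+1]$. *)

From mathcomp Require Import all_boot.
Set Implicit Arguments. Unset Strict Implicit. Unset Printing Implicit Defensive.

(* Strings over Sigma_q = 'I_q are sequences; positions are 1-indexed. *)

(* x_[a,b] = x_a ... x_b (1-indexed); empty if a > b. *)
Definition substr {T : Type} (x : seq T) (a b : nat) : seq T :=
  take (b.+1 - a) (drop a.-1 x).

Definition is_complement {T : eqType} (c : T -> T) : Prop :=
  (forall a, c a != a) /\ (forall a, c (c a) = a).

Definition rc {T : Type} (c : T -> T) (x : seq T) : seq T := rev (map c x).

(* k-reverse-complement duplication at position i: u v v^RC w with |u| = i-1, |v| = k *)
Definition RCdup {T : Type} (c : T -> T) (k i : nat) (x : seq T) : seq T :=
  let u := take i.-1 x in
  let v := take k (drop i.-1 x) in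
  let w := drop (i.-1 + k) x in
  u ++ v ++ rc c v ++ w.

Definition RCD_root {T : eqType} (c : T -> T) (m : nat) (x : seq T) : Prop :=
  forall i, 1 <= i <= size x + 1 - 2 * m ->
    substr x (i + m) (i + 2 * m - 1) != rc c (substr x i (i + m - 1)).

From mathcomp Require Import all_boot zify.

Set Implicit Arguments.
Unset Strict Implicit.
Unset Printing Implicit Defensive.

(* Two adjacent reverse-complement windows of length k say that y is
   RC-symmetric with radius k about the midpoint between them.  Reflecting one
   centre of symmetry through another gives a third, so the centres of the
   windows at j and i, at distance d = i - j, generate centres at every
   multiple of d below the first one, the radius dropping by d each time.  The
   lowest of these within distance m - 1 of the starting centre still has
   radius at least k - (m - 1) >= m (this is where k >= 3m - 3 is used), and
   being less than d further below, its radius-m window lies in the prefix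
   that y copies from x: two adjacent RC windows of length m in x, which an
   m-RCD root does not have. *)

Section ReverseComplementSymmetry.

Variables (T : Type) (c : T -> T).

Definition rc_sym (f : nat -> T) (e r : nat) : Prop :=
  forall s, s < r -> f (e + 1 + s) = c (f (e - s)).

Lemma rc_sym_le f e r1 r2 : r2 <= r1 -> rc_sym f e r1 -> rc_sym f e r2.
Proof. by move=> le_r sym1 s lt_s; apply: sym1; lia. Qed.

Lemma eq_rc_sym f g e r :
  (forall s, s <= e + r -> f s = g s) -> rc_sym f e r -> rc_sym g e r.
Proof. by move=> eq_fg sym_f s lt_s; rewrite -!eq_fg ?sym_f //; lia. Qed.

Lemma size_substr (y : seq T) a b :
  1 <= a -> b <= size y -> size (substr y a b) = b.+1 - a.
Proof. by move=> a_gt0 b_le; rewrite /substr size_takel // size_drop; lia. Qed.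

Lemma nth_substr x0 (y : seq T) a b s :
  s < b.+1 - a -> nth x0 (substr y a b) s = nth x0 y (a.-1 + s).
Proof. by move=> lt_s; rewrite /substr nth_take // nth_drop. Qed.

Lemma substr_eq_rc_sym x0 (y : seq T) p L :
  1 <= p -> p + 2 * L <= size y + 1 ->
  substr y (p + L) (p + 2 * L - 1) = rc c (substr y p (p + L - 1)) <->
  rc_sym (nth x0 y) (p + L - 2) L.
Proof.
move=> p_gt0 fit.
have size_lo : size (substr y p (p + L - 1)) = L by rewrite size_substr; lia.
have size_hi : size (substr y (p + L) (p + 2 * L - 1)) = L by rewrite size_substr; lia.
have nth_hi s : s < L ->
    nth x0 (substr y (p + L) (p + 2 * L - 1)) s = nth x0 y (p + L - 2 + 1 + s).
  by move=> lt_s; rewrite nth_substr; [congr nth; lia | lia].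
have nth_rc s : s < L ->
    nth x0 (rc c (substr y p (p + L - 1))) s = c (nth x0 y (p + L - 2 - s)).
  move=> lt_s; rewrite /rc nth_rev size_map size_lo // (nth_map x0); last lia.
  by rewrite nth_substr; [congr (c (nth _ _ _)); lia | lia].
split=> [eq_win s lt_s | sym].
  by rewrite -nth_hi // eq_win nth_rc.
apply: (eq_from_nth (x0 := x0)); first by rewrite size_rev size_map size_lo.
by move=> s; rewrite size_hi => lt_s; rewrite nth_hi // nth_rc // sym.
Qed.

Hypothesis cK : involutive c.

Lemma rc_sym_reflect f e d ra rb :
  d <= e -> rc_sym f (e + d) ra -> rc_sym f e rb ->
  rc_sym f (e - d) (minn ra (rb - d)).
Proof.
move=> le_de sym_hi sym_mid s lt_s.
have mirror_hi : f (e - d + 1 + s) = c (f (e + d - s)).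
  case: (leqP d s) => [le_ds | lt_sd].
    rewrite (_ : e - d + 1 + s = e + 1 + (s - d)); last lia.
    by rewrite sym_mid; [congr (c (f _)) | ]; lia.
  have := sym_mid (d - 1 - s) ltac:(lia).
  rewrite (_ : e + 1 + (d - 1 - s) = e + d - s); last lia.
  rewrite (_ : e - (d - 1 - s) = e - d + 1 + s); last lia.
  by move=> ->; rewrite cK.
have mirror_mid : f (e + d - s) = c (f (e + 1 + (d + s))).
  have := sym_hi s ltac:(lia).
  rewrite (_ : e + d + 1 + s = e + 1 + (d + s)); last lia.
  by move=> ->; rewrite cK.
rewrite mirror_hi mirror_mid sym_mid; last lia.
by rewrite cK; congr (c (f _)); lia.
Qed.

Lemma rc_sym_shift f e d r t :
  rc_sym f (e + d) r -> rc_sym f e r -> t * d <= e ->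
  rc_sym f (e - t * d) (r - t * d).
Proof.
move=> sym_hi sym_lo.
suff shifted : forall n, n * d <= e ->
    rc_sym f (e + d - n * d) (r - (n * d - d)) /\ rc_sym f (e - n * d) (r - n * d).
  by move=> le_td; case: (shifted t le_td).
elim=> {t} [|t IH] le_td; first by rewrite mul0n sub0n !subn0.
rewrite mulSn in le_td *.
have [sym_prev sym_t] := IH ltac:(lia).
split.
  rewrite (_ : e + d - (d + t * d) = e - t * d); last lia.
  by rewrite (_ : d + t * d - d = t * d); last lia.
rewrite (_ : e + d - t * d = e - t * d + d) in sym_prev; last lia.
rewrite (_ : e - (d + t * d) = e - t * d - d); last lia.
apply: rc_sym_le (rc_sym_reflect _ sym_prev sym_t); lia.
Qed.

Lemma rc_sym_two_centres f e d r m :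
  0 < d -> m <= e + 1 -> rc_sym f (e + d) r -> rc_sym f e r ->
  exists e', [/\ e - (m - 1) <= e', e' + m <= e + d & rc_sym f e' (r - (m - 1))].
Proof.
move=> d_gt0 le_me sym_hi sym_lo.
have le_A := leq_divM (m - 1) d.
have lt_Ad : m - 1 < (m - 1) %/ d * d + d by rewrite addnC -mulSn ltn_ceil.
exists (e - (m - 1) %/ d * d); split; [lia | lia |].
apply: rc_sym_le (rc_sym_shift sym_hi sym_lo _); lia.
Qed.

End ReverseComplementSymmetry.

Lemma RCD_root_no_rc_sym {T : eqType} (c : T -> T) x0 m (x : seq T) e :
  RCD_root c m x -> m - 1 <= e -> e + m < size x ->
  ~ rc_sym c (nth x0 x) e m.
Proof.
move=> root le_me lt_e sym.
have [_ to_window] := substr_eq_rc_sym c x0 (y := x) (p := e + 2 - m) (L := m)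
  ltac:(lia) ltac:(lia).
rewrite (_ : e + 2 - m + m - 2 = e) in to_window; last lia.
by have := root (e + 2 - m) ltac:(lia); rewrite to_window // eqxx.
Qed.

Section Duplication.

Variables (T : Type) (c : T -> T) (k i : nat) (x : seq T).
Hypothesis fit : i.-1 + k <= size x.

Lemma size_RCdup : size (RCdup c k i x) = size x + k.
Proof.
by rewrite !size_cat size_rev size_map size_drop !size_takel ?size_drop; lia.
Qed.

Lemma nth_RCdup_prefix x0 s :
  s < i.-1 + k -> nth x0 (RCdup c k i x) s = nth x0 x s.
Proof.
move=> lt_s; rewrite /RCdup catA -takeD nth_cat size_takel //.
by rewrite lt_s nth_take.
Qed.

Lemma RCdup_rc_window :
  1 <= i -> let y := RCdup c k i x in
  substr y (i + k) (i + 2 * k - 1) = rc c (substr y i (i + k - 1)).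
Proof.
move=> i_gt0 /=; rewrite /RCdup; set v := take k (drop i.-1 x).
have size_u : size (take i.-1 x) = i.-1 by rewrite size_takel; lia.
have size_v : size v = k by rewrite size_takel // size_drop; lia.
have size_rc : size (rc c v) = k by rewrite size_rev size_map size_v.
rewrite /substr catA (_ : (i + k).-1 = size (take i.-1 x ++ v)); last first.
  by rewrite size_cat size_u size_v; lia.
rewrite drop_size_cat // (_ : (i + 2 * k - 1).+1 - (i + k) = size (rc c v)); last lia.
rewrite take_size_cat // (_ : (i + k - 1).+1 - i = size v); last first.
  by rewrite size_v; lia.
by rewrite -catA {1}(_ : i.-1 = size (take i.-1 x)) // drop_size_cat // take_size_cat.
Qed.

End Duplication.

Theorem lemma1 (q : nat) (c : 'I_q -> 'I_q) (m n k i : nat) (x : seq 'I_q) :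
  2 <= q -> ~~ odd q -> is_complement c ->
  2 <= m -> size x = n -> RCD_root c m x ->
  3 * m - 3 <= k -> 1 <= i -> i + k <= n + 1 ->
  let y := RCdup c k i x in
  substr y (i + k) (i + 2 * k - 1) = rc c (substr y i (i + k - 1)) /\
  (forall j, 1 <= j < i ->
     substr y (j + k) (j + 2 * k - 1) != rc c (substr y j (j + k - 1))).
Proof.
move=> q_ge2 _ [_ cK] m_ge2 size_x root le_k i_gt0 fit y.
have x0 : 'I_q := Ordinal (ltnW q_ge2).
have fit' : i.-1 + k <= size x by lia.
have window_i := RCdup_rc_window c fit' i_gt0.
split=> // j /andP [j_gt0 lt_ji]; apply/negP => /eqP window_j.
have size_y : size y = n + k by rewrite size_RCdup // size_x.
have sym_i : rc_sym c (nth x0 y) (j + k - 2 + (i - j)) k.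
  rewrite (_ : j + k - 2 + (i - j) = i + k - 2); last lia.
  by apply/(substr_eq_rc_sym c x0 i_gt0); first lia.
have sym_j : rc_sym c (nth x0 y) (j + k - 2) k.
  by apply/(substr_eq_rc_sym c x0 j_gt0); first lia.
have [e' [lo_e' hi_e' sym_e']] := rc_sym_two_centres cK
  (e := j + k - 2) (d := i - j) (m := m) ltac:(lia) ltac:(lia) sym_i sym_j.
apply: (RCD_root_no_rc_sym (x0 := x0) (e := e') root); [lia | rewrite size_x; lia |].
apply: eq_rc_sym (rc_sym_le _ sym_e') => [s le_s|]; last lia.
by apply: (nth_RCdup_prefix c fit'); lia.
Qed.
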